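(* Let $\mathcal T\subseteq\mathcal{ST}\times\mathcal{ST}$ be a type simulation, i.e. $\mathcal T\subseteq F_{\leq}(\mathcal T)$, and let $B=\{(\mathcal M(S),\mathcal M(T)) : S\,\mathcal T\,T\}$. Then $B\subseteq\mathcal S(B,B)$.
   Context: Fix base types $BT$ with preorder $\leq_{\mathsf b}$ and labels $\mathcal L$. Session type terms: $T::=\mathsf{end}\mid ?[M]T\mid ![M]T\mid \&\langle l_1{:}T_1,\dots,l_n{:}T_n\rangle\mid \oplus\langle l_1{:}T_1,\dots,l_n{:}T_n\rangle\mid \mu X.T\mid X$, $M::=T\mid\mathtt t$. Contract terms: $\sigma::=\mathbf 1\mid ?\mathtt t.\sigma\mid !\mathtt t.\sigma\mid !(\sigma).\sigma\mid ?(\sigma).\sigma\mid \sum_{i\in I}?l_i.\sigma_i\mid \bigoplus_{i\in I}!l_i.\sigma_i\mid \mu x.\sigma\mid x$. $\mathcal{ST}$, $\mathcal{SC}$ are the closed guarded terms. $\mathcal M$ is the homomorphic translation ($\mathsf{end}\mapsto\mathbf 1$, $![\mathtt t]S\mapsto!\mathtt t.\mathcal M(S)$, $?[\mathtt t]S\mapsto?\mathtt t.\mathcal M(S)$, $![T]S\mapsto!(\mathcal M(T)).\mathcal M(S)$, $?[T]S\mapsto?(\mathcal M(T)).\mathcal M(S)$, $\&\langle l_i{:}S_i\rangle\mapsto\sum_i?l_i.\mathcal M(S_i)$, $\oplus\langle l_i{:}S_i\rangle\mapsto\bigoplus_i!l_i.\mathcal M(S_i)$, $\mu X.S\mapsto\mu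 x.\mathcal M(S)$, $X\mapsto x$). For both languages $\mathrm{unfold}(\mu x.\sigma')=\mathrm{unfold}(\sigma'[\mu x.\sigma'/x])$, otherwise identity. $\mathcal S(R,B)$: contract pairs $(\sigma_1,\sigma_2)$ such that, depending on $\mathrm{unfold}(\sigma_1)$: $\mathbf 1$ forces $\mathrm{unfold}(\sigma_2)=\mathbf 1$; $?\mathtt t_1.\sigma_1'$ forces $?\mathtt t_2.\sigma_2'$ with $\sigma_1'R\sigma_2'$, $\mathtt t_1\leq_{\mathsf b}\mathtt t_2$; $!\mathtt t_1.\sigma_1'$ forces $!\mathtt t_2.\sigma_2'$ with $\sigma_1'R\sigma_2'$, $\mathtt t_2\leq_{\mathsf b}\mathtt t_1$; $!(\sigma^m_1).\sigma_1'$ forces $!(\sigma^m_2).\sigma_2'$ with $\sigma_1'R\sigma_2'$, $\sigma^m_2B\sigma^m_1$; $?(\sigma^m_1).\sigma_1'$ forces $?(\sigma^m_2).\sigma_2'$ with $\sigma_1'R\sigma_2'$, $\sigma^m_1B\sigma^m_2$; $\sum_{i\in I}?l_i.\sigma^1_i$ forces $\sum_{j\in J}?l_j.\sigma^2_j$ with $I\subseteq J$, $\sigma^1_iR\sigma^2_i$; $\bigoplus_{i\in I}!l_i.\sigma^1_i$ forces $\bigoplus_{j\in J}!l_j.\sigma^2_j$ with $J\subseteq I$, $\sigma^1_jR\sigma^2_j$ (forced forms are those of $\mathrm{unfold}(\sigma_2)$). $F_{\leq}(R)$, for $R\subseteq\mathcal{ST}^2$: pairs $(T,S)$ such that: $\mathrm{unfold}(T)=\mathsf{end}$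 forces $\mathrm{unfold}(S)=\mathsf{end}$; $?[\mathtt t_1]S_1$ forces $\mathrm{unfold}(S)=?[\mathtt t_2]S_2$ with $S_1RS_2$, $\mathtt t_1\leq_{\mathsf b}\mathtt t_2$; $![\mathtt t_1]S_1$ forces $![\mathtt t_2]S_2$ with $S_1RS_2$, $\mathtt t_2\leq_{\mathsf b}\mathtt t_1$; $![T_1]S_1$ forces $![T_2]S_2$ with $S_1RS_2$, $T_2RT_1$; $?[T_1]S_1$ forces $?[T_2]S_2$ with $S_1RS_2$, $T_1RT_2$; $\&\langle l_1{:}T_1..l_m{:}T_m\rangle$ forces $\&\langle l_1{:}S_1..l_n{:}S_n\rangle$, $m\le n$, $T_iRS_i$; $\oplus\langle l_1{:}T_1..l_m{:}T_m\rangle$ forces $\oplus\langle l_1{:}S_1..l_n{:}S_n\rangle$, $n\le m$, $T_iRS_i$. *)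

From Stdlib Require Import List Arith.
Import ListNotations.
Set Implicit Arguments.

Section Defs.
Variables (BT L : Type).

Inductive stype : Type :=
| s_end : stype
| s_recv_b : BT -> stype -> stype
| s_send_b : BT -> stype -> stype
| s_recv_s : stype -> stype -> stype
| s_send_s : stype -> stype -> stype
| s_branch : list (L * stype) -> stype
| s_select : list (L * stype) -> stype
| s_mu : nat -> stype -> stype
| s_var : nat -> stype.

Inductive contract : Type :=
| c_one : contract
| c_recv_b : BT -> contract -> contract
| c_send_b : BT -> contract -> contract
| c_send_c : contract -> contract -> contract
| c_recv_c : contract -> contract -> contract
| c_ext : list (L * contract) -> contract
| c_int : list (L * contract) -> contract
| c_mu : nat -> contract -> contract
| c_var : nat -> contract.

Fixpoint s_subst (X : nat) (U : stype) (T : stype) : stype :=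
  match T with
  | s_end => s_end
  | s_recv_b t Sx => s_recv_b t (s_subst X U Sx)
  | s_send_b t Sx => s_send_b t (s_subst X U Sx)
  | s_recv_s T1 Sx => s_recv_s (s_subst X U T1) (s_subst X U Sx)
  | s_send_s T1 Sx => s_send_s (s_subst X U T1) (s_subst X U Sx)
  | s_branch ls => s_branch (map (fun p => (fst p, s_subst X U (snd p))) ls)
  | s_select ls => s_select (map (fun p => (fst p, s_subst X U (snd p))) ls)
  | s_mu Y Sx => if Nat.eqb X Y then s_mu Y Sx else s_mu Y (s_subst X U Sx)
  | s_var Y => if Nat.eqb X Y then U else s_var Y
  end.

Fixpoint c_subst (X : nat) (U : contract) (T : contract) : contract :=
  match T with
  | c_one => c_one
  | c_recv_b t Sx => c_recv_b t (c_subst X U Sx)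
  | c_send_b t Sx => c_send_b t (c_subst X U Sx)
  | c_send_c T1 Sx => c_send_c (c_subst X U T1) (c_subst X U Sx)
  | c_recv_c T1 Sx => c_recv_c (c_subst X U T1) (c_subst X U Sx)
  | c_ext ls => c_ext (map (fun p => (fst p, c_subst X U (snd p))) ls)
  | c_int ls => c_int (map (fun p => (fst p, c_subst X U (snd p))) ls)
  | c_mu Y Sx => if Nat.eqb X Y then c_mu Y Sx else c_mu Y (c_subst X U Sx)
  | c_var Y => if Nat.eqb X Y then U else c_var Y
  end.

Fixpoint s_fv (T : stype) : list nat :=
  match T with
  | s_end => []
  | s_recv_b _ Sx | s_send_b _ Sx => s_fv Sx
  | s_recv_s T1 Sx | s_send_s T1 Sx => s_fv T1 ++ s_fv Sx
  | s_branch ls | s_select ls => flat_map (fun p => s_fv (snd p)) ls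
  | s_mu Y Sx => remove Nat.eq_dec Y (s_fv Sx)
  | s_var Y => [Y]
  end.

Fixpoint c_fv (T : contract) : list nat :=
  match T with
  | c_one => []
  | c_recv_b _ Sx | c_send_b _ Sx => c_fv Sx
  | c_send_c T1 Sx | c_recv_c T1 Sx => c_fv T1 ++ c_fv Sx
  | c_ext ls | c_int ls => flat_map (fun p => c_fv (snd p)) ls
  | c_mu Y Sx => remove Nat.eq_dec Y (c_fv Sx)
  | c_var Y => [Y]
  end.

Fixpoint s_unguarded (T : stype) : list nat :=
  match T with
  | s_mu Y Sx => remove Nat.eq_dec Y (s_unguarded Sx)
  | s_var Y => [Y]
  | _ => []
  end.

Fixpoint c_unguarded (T : contract) : list nat :=
  match T with
  | c_mu Y Sx => remove Nat.eq_dec Y (c_unguarded Sx)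
  | c_var Y => [Y]
  | _ => []
  end.

Fixpoint s_guarded (T : stype) : Prop :=
  match T with
  | s_end | s_var _ => True
  | s_recv_b _ Sx | s_send_b _ Sx => s_guarded Sx
  | s_recv_s T1 Sx | s_send_s T1 Sx => s_guarded T1 /\ s_guarded Sx
  | s_branch ls | s_select ls =>
      fold_right (fun p P => s_guarded (snd p) /\ P) True ls
  | s_mu Y Sx => ~ In Y (s_unguarded Sx) /\ s_guarded Sx
  end.

Fixpoint c_guarded (T : contract) : Prop :=
  match T with
  | c_one | c_var _ => True
  | c_recv_b _ Sx | c_send_b _ Sx => c_guarded Sx
  | c_send_c T1 Sx | c_recv_c T1 Sx => c_guarded T1 /\ c_guarded Sx
  | c_ext ls | c_int ls =>
      fold_right (fun p P => c_guarded (snd p) /\ P) True ls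
  | c_mu Y Sx => ~ In Y (c_unguarded Sx) /\ c_guarded Sx
  end.

Definition ST (T : stype) : Prop := s_fv T = [] /\ s_guarded T.
Definition SC (s : contract) : Prop := c_fv s = [] /\ c_guarded s.

(* unfold(mu x.s') = unfold(s'[mu x.s'/x]), otherwise identity;
   given as the inductive graph of these defining equations. *)
Inductive s_unfolds : stype -> stype -> Prop :=
| s_unfolds_mu : forall X T U,
    s_unfolds (s_subst X (s_mu X T) T) U -> s_unfolds (s_mu X T) U
| s_unfolds_other : forall T,
    (forall X T', T <> s_mu X T') -> s_unfolds T T.

Inductive c_unfolds : contract -> contract -> Prop :=
| c_unfolds_mu : forall X T U,
    c_unfolds (c_subst X (c_mu X T) T) U -> c_unfolds (c_mu X T) U
| c_unfolds_other : forall T,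
    (forall X T', T <> c_mu X T') -> c_unfolds T T.

Fixpoint Mtr (T : stype) : contract :=
  match T with
  | s_end => c_one
  | s_send_b t Sx => c_send_b t (Mtr Sx)
  | s_recv_b t Sx => c_recv_b t (Mtr Sx)
  | s_send_s T1 Sx => c_send_c (Mtr T1) (Mtr Sx)
  | s_recv_s T1 Sx => c_recv_c (Mtr T1) (Mtr Sx)
  | s_branch ls => c_ext (map (fun p => (fst p, Mtr (snd p))) ls)
  | s_select ls => c_int (map (fun p => (fst p, Mtr (snd p))) ls)
  | s_mu X Sx => c_mu X (Mtr Sx)
  | s_var X => c_var X
  end.

Variable leb : BT -> BT -> Prop.

Definition F_le (R : stype -> stype -> Prop) (T Sx : stype) : Prop :=
  ST T /\ ST Sx /\
  forall U, s_unfolds T U ->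
  match U with
  | s_end => s_unfolds Sx s_end
  | s_recv_b t1 S1 => exists t2 S2,
      s_unfolds Sx (s_recv_b t2 S2) /\ R S1 S2 /\ leb t1 t2
  | s_send_b t1 S1 => exists t2 S2,
      s_unfolds Sx (s_send_b t2 S2) /\ R S1 S2 /\ leb t2 t1
  | s_send_s T1 S1 => exists T2 S2,
      s_unfolds Sx (s_send_s T2 S2) /\ R S1 S2 /\ R T2 T1
  | s_recv_s T1 S1 => exists T2 S2,
      s_unfolds Sx (s_recv_s T2 S2) /\ R S1 S2 /\ R T1 T2
  | s_branch ls1 => exists ls2,
      s_unfolds Sx (s_branch ls2) /\ length ls1 <= length ls2 /\
      forall i p1, nth_error ls1 i = Some p1 ->
        exists p2, nth_error ls2 i = Some p2 /\ fst p1 = fst p2 /\ R (snd p1) (snd p2)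
  | s_select ls1 => exists ls2,
      s_unfolds Sx (s_select ls2) /\ length ls2 <= length ls1 /\
      forall i p2, nth_error ls2 i = Some p2 ->
        exists p1, nth_error ls1 i = Some p1 /\ fst p1 = fst p2 /\ R (snd p1) (snd p2)
  | s_mu _ _ | s_var _ => False
  end.

Definition S_sim (R B : contract -> contract -> Prop) (s1 s2 : contract) : Prop :=
  SC s1 /\ SC s2 /\
  forall u, c_unfolds s1 u ->
  match u with
  | c_one => c_unfolds s2 c_one
  | c_recv_b t1 s1' => exists t2 s2',
      c_unfolds s2 (c_recv_b t2 s2') /\ R s1' s2' /\ leb t1 t2
  | c_send_b t1 s1' => exists t2 s2',
      c_unfolds s2 (c_send_b t2 s2') /\ R s1' s2' /\ leb t2 t1
  | c_send_c m1 s1' => exists m2 s2',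
      c_unfolds s2 (c_send_c m2 s2') /\ R s1' s2' /\ B m2 m1
  | c_recv_c m1 s1' => exists m2 s2',
      c_unfolds s2 (c_recv_c m2 s2') /\ R s1' s2' /\ B m1 m2
  | c_ext ls1 => exists ls2,
      c_unfolds s2 (c_ext ls2) /\
      forall l x1, In (l, x1) ls1 -> exists x2, In (l, x2) ls2 /\ R x1 x2
  | c_int ls1 => exists ls2,
      c_unfolds s2 (c_int ls2) /\
      forall l x2, In (l, x2) ls2 -> exists x1, In (l, x1) ls1 /\ R x1 x2
  | c_mu _ _ | c_var _ => False
  end.

End Defs.

Arguments s_end {BT L}.
Arguments c_one {BT L}.

(* The translation M commutes with substitution, hence with unfolding, in both
   directions: every unfolding of M(T) is M(U) for an unfolding U of T, and
   M maps unfoldings of S to unfoldings of M(S).  So each clause of F_<= R for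
   a pair (T, S) translates clause by clause into the corresponding clause of
   S(M R, M R) for (M(T), M(S)); instantiating R with the type simulation gives
   the theorem. *)

From Stdlib Require Import List Arith.
Import ListNotations.

Arguments s_recv_b {BT L}. Arguments s_send_b {BT L}. Arguments s_recv_s {BT L}.
Arguments s_send_s {BT L}. Arguments s_branch {BT L}. Arguments s_select {BT L}.
Arguments s_mu {BT L}. Arguments s_var {BT L}.
Arguments c_recv_b {BT L}. Arguments c_send_b {BT L}. Arguments c_recv_c {BT L}.
Arguments c_send_c {BT L}. Arguments c_ext {BT L}. Arguments c_int {BT L}.
Arguments c_mu {BT L}. Arguments c_var {BT L}.

Section Translation.
Context {BT L : Type}.

Definition stype_nested_ind (P : stype BT L -> Prop)
  (H_end : P s_end)
  (H_recv_b : forall t S, P S -> P (s_recv_b t S))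
  (H_send_b : forall t S, P S -> P (s_send_b t S))
  (H_recv_s : forall T S, P T -> P S -> P (s_recv_s T S))
  (H_send_s : forall T S, P T -> P S -> P (s_send_s T S))
  (H_branch : forall ls, Forall (fun p => P (snd p)) ls -> P (s_branch ls))
  (H_select : forall ls, Forall (fun p => P (snd p)) ls -> P (s_select ls))
  (H_mu : forall X S, P S -> P (s_mu X S))
  (H_var : forall X, P (s_var X)) : forall T, P T :=
  fix f T := match T with
  | s_end => H_end
  | s_recv_b t Sx => H_recv_b t Sx (f Sx)
  | s_send_b t Sx => H_send_b t Sx (f Sx)
  | s_recv_s T Sx => H_recv_s T Sx (f T) (f Sx)
  | s_send_s T Sx => H_send_s T Sx (f T) (f Sx)
  | s_branch ls => H_branch ls ((fix g ls : Forall (fun p => P (snd p)) ls :=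
       match ls with [] => Forall_nil _ | p :: r => Forall_cons p (f (snd p)) (g r) end) ls)
  | s_select ls => H_select ls ((fix g ls : Forall (fun p => P (snd p)) ls :=
       match ls with [] => Forall_nil _ | p :: r => Forall_cons p (f (snd p)) (g r) end) ls)
  | s_mu X Sx => H_mu X Sx (f Sx)
  | s_var X => H_var X
  end.

Definition Mtr_labelled (ls : list (L * stype BT L)) : list (L * contract BT L) :=
  map (fun p => (fst p, Mtr (snd p))) ls.

Definition Mtr_image (R : stype BT L -> stype BT L -> Prop) (s1 s2 : contract BT L) :=
  exists S T, R S T /\ s1 = Mtr S /\ s2 = Mtr T.

Lemma Mtr_subst X (U T : stype BT L) :
  Mtr (s_subst X U T) = c_subst X (Mtr U) (Mtr T).
Proof.
  induction T using stype_nested_ind; simpl; try congruence;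
  try (f_equal; rewrite !map_map; apply map_ext_in; intros p Hp;
       rewrite Forall_forall in H; simpl; rewrite (H p Hp); reflexivity).
  all: destruct (Nat.eqb X X0); simpl; congruence.
Qed.

Lemma Mtr_fv (T : stype BT L) : c_fv (Mtr T) = s_fv T.
Proof.
  induction T using stype_nested_ind; simpl; try congruence;
  induction ls as [|p r IH]; simpl; auto; inversion H; subst;
  rewrite H2, IH; auto.
Qed.

Lemma Mtr_unguarded (T : stype BT L) : c_unguarded (Mtr T) = s_unguarded T.
Proof. induction T; simpl; congruence. Qed.

Lemma Mtr_guarded (T : stype BT L) : s_guarded T -> c_guarded (Mtr T).
Proof.
  induction T using stype_nested_ind; simpl; try tauto;
  try (induction ls as [|p r IH]; simpl; auto; inversion H; subst; tauto).
  rewrite Mtr_unguarded; tauto.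
Qed.

Lemma ST_Mtr_SC (T : stype BT L) : ST T -> SC (Mtr T).
Proof. intros [Hfv Hg]; split; [rewrite Mtr_fv | apply Mtr_guarded]; auto. Qed.

Lemma Mtr_not_mu {T : stype BT L} :
  (forall X T', T <> s_mu X T') -> forall X c, Mtr T <> c_mu X c.
Proof. destruct T; intros Hnmu Y c E; try discriminate; eapply Hnmu; reflexivity. Qed.

Lemma s_unfolds_Mtr {T U : stype BT L} : s_unfolds T U -> c_unfolds (Mtr T) (Mtr U).
Proof.
  induction 1 as [X T U _ IH | T Hnmu].
  - rewrite (Mtr_subst X (s_mu X T) T) in IH; apply c_unfolds_mu; exact IH.
  - constructor; exact (Mtr_not_mu Hnmu).
Qed.

Lemma c_unfolds_Mtr_inv {T : stype BT L} {u} :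
  c_unfolds (Mtr T) u -> exists U, s_unfolds T U /\ u = Mtr U.
Proof.
  intros H; remember (Mtr T) as c eqn:E; revert T E.
  induction H as [X c u _ IH | c Hnmu]; intros T E.
  - destruct T as [| | | | | | | Y T' |]; simpl in E; try discriminate.
    injection E as -> ->.
    destruct (IH (s_subst Y (s_mu Y T') T')) as [U [HU ->]].
    + rewrite Mtr_subst; reflexivity.
    + exists U; split; [constructor|]; auto.
  - subst; exists T; split; auto; constructor.
    intros Y T' ->; exact (Hnmu Y (Mtr T') eq_refl).
Qed.

Lemma Mtr_labelled_sim {R : stype BT L -> stype BT L -> Prop}
    {Q : contract BT L -> contract BT L -> Prop} {ls1 ls2} :
  (forall S T, R S T -> Q (Mtr S) (Mtr T)) ->
  (forall i p1, nth_error ls1 i = Some p1 ->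
     exists p2, nth_error ls2 i = Some p2 /\ fst p1 = fst p2 /\ R (snd p1) (snd p2)) ->
  forall l x1, In (l, x1) (Mtr_labelled ls1) ->
    exists x2, In (l, x2) (Mtr_labelled ls2) /\ Q x1 x2.
Proof.
  intros HRQ Hnth l x1 Hin.
  apply in_map_iff in Hin as [p1 [E Hp1]]; injection E as <- <-.
  destruct (In_nth_error _ _ Hp1) as [i Hi].
  destruct (Hnth i p1 Hi) as [p2 [Hi2 [-> HR]]].
  exists (Mtr (snd p2)); split; auto.
  apply (in_map (fun p => (fst p, Mtr (snd p)))); eapply nth_error_In; eauto.
Qed.

Variable leb : BT -> BT -> Prop.

Lemma F_le_Mtr_S_sim {R : stype BT L -> stype BT L -> Prop} {T S : stype BT L} :
  F_le leb R T S -> S_sim leb (Mtr_image R) (Mtr_image R) (Mtr T) (Mtr S).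
Proof.
  intros [HT [HS Hstep]].
  split; [now apply ST_Mtr_SC | split; [now apply ST_Mtr_SC |]].
  intros u Hu; destruct (c_unfolds_Mtr_inv Hu) as [U [HU ->]].
  assert (HMR : forall S1 S2, R S1 S2 -> Mtr_image R (Mtr S1) (Mtr S2))
    by (intros S1 S2 HR; exists S1, S2; auto).
  specialize (Hstep U HU).
  destruct U as [| t1 S1 | t1 S1 | T1 S1 | T1 S1 | ls1 | ls1 | X S1 | X]; simpl in *;
    try contradiction.
  - exact (s_unfolds_Mtr Hstep).
  - destruct Hstep as [t2 [S2 [HU2 [HR Hle]]]].
    exists t2, (Mtr S2); split; [exact (s_unfolds_Mtr HU2) | split; auto].
  - destruct Hstep as [t2 [S2 [HU2 [HR Hle]]]].
    exists t2, (Mtr S2); split; [exact (s_unfolds_Mtr HU2) | split; auto].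
  - destruct Hstep as [T2 [S2 [HU2 [HR HRm]]]].
    exists (Mtr T2), (Mtr S2); split; [exact (s_unfolds_Mtr HU2) | split; auto].
  - destruct Hstep as [T2 [S2 [HU2 [HR HRm]]]].
    exists (Mtr T2), (Mtr S2); split; [exact (s_unfolds_Mtr HU2) | split; auto].
  - destruct Hstep as [ls2 [HU2 [_ Hnth]]].
    exists (Mtr_labelled ls2); split; [exact (s_unfolds_Mtr HU2) |].
    exact (Mtr_labelled_sim HMR Hnth).
  - destruct Hstep as [ls2 [HU2 [_ Hnth]]].
    exists (Mtr_labelled ls2); split; [exact (s_unfolds_Mtr HU2) |].
    apply (Mtr_labelled_sim (R := fun a b => R b a) (Q := fun x y => Mtr_image R y x));
      [now intros a b Hab; apply HMR |].
    intros i p2 Hi; destruct (Hnth i p2 Hi) as [p1 [Hi1 [Hf HR]]].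
    exists p1; auto.
Qed.

End Translation.

Theorem mainTheorem16 (BT L : Type) (leb : BT -> BT -> Prop)
  (leb_refl : forall t, leb t t)
  (leb_trans : forall t1 t2 t3, leb t1 t2 -> leb t2 t3 -> leb t1 t3)
  (Tr : stype BT L -> stype BT L -> Prop)
  (Tr_sim : forall T S, Tr T S -> F_le leb Tr T S) :
  let B := fun s1 s2 : contract BT L =>
             exists S T, Tr S T /\ s1 = Mtr S /\ s2 = Mtr T in
  forall s1 s2, B s1 s2 -> S_sim leb B B s1 s2.
Proof.
  intros B s1 s2 [S [T [HTr [-> ->]]]].
  exact (F_le_Mtr_S_sim leb (Tr_sim S T HTr)).
Qed.
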